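(* Let $\mathbf A$ be an $L\times K$ binary matrix with full row rank, and consider any computing scheme that computes $\mathbf r=\mathbf s\mathbf A$ over $\mathbb F_2$ using a circuit built from gates of Gate Model I, each failing independently with error probability $\epsilon$, with maximum fan-in $D$. If the scheme achieves block error probability $P_e^{\text{blk}}=\Pr(\hat{\mathbf r}\ne\mathbf r)<p_{\text{tar}}$, then the number of operations per output bit satisfies $$\mathscr N_{\text{per-bit}}\ge\frac{L\log(1/p_{\text{tar}})}{KD\log(D/\epsilon)}=\Omega\!\left(\frac{L\log(1/p_{\text{tar}})}{K\log(1/\epsilon)}\right).$$
   Context: Gate Model I: each gate computes a deterministic Boolean function $g$ of $d_g\le D$ inputs and outputs $g(u_1,\dots,u_{d_g})\oplus z_g$ with $z_g\sim\mathrm{Bernoulli}(\epsilon)$, $\epsilon<1/2$, independently across gates and across uses. A noisy circuit has binary inputs $s_1,\dots,s_L$, such gates, and noiseless registers and wires; gate inputs can be circuit inputs, gate outputs or register outputs. The computation proceeds in a predetermined number of stages; in each stage some gates are activated and some registers updated, and the outputs are finally stored in registers. One operation is one activation of one gate; $\mathscr N_{\text{per-bit}}$ is the total number of operations divided by $K$. $\hat{\mathbf r}$ is the computed output. *)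

From HB Require Import structures.
From mathcomp Require Import all_boot all_order all_algebra.
From mathcomp Require Import reals exp.
Set Implicit Arguments. Unset Strict Implicit. Unset Printing Implicit Defensive.
Import Order.TTheory GRing.Theory Num.Theory.
Local Open Scope ring_scope.

(* A noisy circuit with L binary inputs, K outputs and N operations
   (gate activations), listed in the order in which they are performed.
   Operation i (0 <= i < N):
   - has fan-in [fanin C i];
   - computes the deterministic Boolean function [gfun C i] of its inputs
     (given as the sequence of the [fanin C i] input values), then XORs
     its own independent Bernoulli(eps) noise bit;
   - its j-th input wire reads [wire C i j] : either a circuit input
     [inl l] (l : 'I_L) or the (noiseless, possibly register-stored)
     output of an earlier operation [inr k] with k < i.
   Output bit k is the value stored in a register, i.e. the output of
   operation [outp C k]. *)
Record circuit (L K N : nat) := Circuit {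
  fanin : nat -> nat;
  gfun  : nat -> seq 'F_2 -> 'F_2;
  wire  : nat -> nat -> 'I_L + nat;
  outp  : 'I_K -> nat
}.

Definition wf_circuit (L K N D : nat) (C : circuit L K N) : Prop :=
  (forall i, (i < N)%N -> (fanin C i <= D)%N) /\
  (forall i j, (i < N)%N -> (j < fanin C i)%N ->
     match wire C i j with inl _ => True | inr k => (k < i)%N end) /\
  (forall k, (outp C k < N)%N).

Definition src_val (L : nat) (s : 'rV['F_2]_L) (acc : seq 'F_2)
  (w : 'I_L + nat) : 'F_2 :=
  match w with inl l => s 0 l | inr k => nth 0 acc k end.

Definition step L K N (C : circuit L K N) (s : 'rV['F_2]_L) (z : N.-tuple bool)
  (acc : seq 'F_2) (i : nat) : seq 'F_2 :=
  rcons acc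
    (gfun C i [seq src_val s acc (wire C i j) | j <- iota 0 (fanin C i)]
     + (nth false z i)%:R).

Definition op_values L K N (C : circuit L K N) (s : 'rV['F_2]_L)
  (z : N.-tuple bool) : seq 'F_2 :=
  foldl (step C s z) [::] (iota 0 N).

Definition circ_out L K N (C : circuit L K N) (s : 'rV['F_2]_L)
  (z : N.-tuple bool) : 'rV['F_2]_K :=
  \row_k nth 0 (op_values C s z) (outp C k).

Definition noise_prob (R : realType) (N : nat) (eps : R) (z : N.-tuple bool) : R :=
  \prod_(i < N) (if tnth z i then eps else 1 - eps).

Definition blk_err (R : realType) L K N (C : circuit L K N) (eps : R)
  (A : 'M['F_2]_(L, K)) (s : 'rV['F_2]_L) : R :=
  \sum_(z : N.-tuple bool | circ_out C s z != s *m A) noise_prob eps z.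

From HB Require Import structures.
From mathcomp Require Import all_boot all_order all_algebra.
From mathcomp Require Import reals exp.
From mathcomp Require Import ring lra.
Import Order.TTheory GRing.Theory Num.Theory.
Local Open Scope ring_scope.
Set Implicit Arguments. Unset Strict Implicit.

(* Two facts drive the bound.  Every output bit is the output of a single
   noisy gate, so flipping that gate's noise bit flips the output: the noise
   patterns split into pairs whose probabilities differ by a factor at most
   eps/(1-eps), and the block error is at least eps.  Hence ptar > eps and
   ln(1/ptar) < ln(D/eps), so the bound reduces to L <= N.  And if N < L,
   the map s |-> sA is injective on 2^L inputs while the circuit, for a fixed
   noise pattern, produces at most 2^N distinct outputs; some input is then
   never computed correctly, forcing ptar > 1 and a nonpositive left side. *)

Section Evaluation.
Variables (L K N : nat) (C : circuit L K N) (s : 'rV['F_2]_L).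

Definition op_prefix (z : N.-tuple bool) n := foldl (step C s z) [::] (iota 0 n).

Lemma op_prefixS z n : op_prefix z n.+1 = step C s z (op_prefix z n) n.
Proof. by rewrite /op_prefix -[n.+1]addn1 iotaD foldl_cat add0n. Qed.

Lemma size_op_prefix z n : size (op_prefix z n) = n.
Proof. by elim: n => [//|n IH]; rewrite op_prefixS /step size_rcons IH. Qed.

Lemma nth_op_prefix z n i :
  (i < n)%N -> nth 0 (op_prefix z n) i = nth 0 (op_prefix z i.+1) i.
Proof.
elim: n => [//|n IH] lt_in; rewrite op_prefixS /step nth_rcons size_op_prefix.
case: ltnP => [lt_in'|le_ni]; first by rewrite IH.
have -> : i = n by apply/eqP; rewrite eqn_leq le_ni -ltnS lt_in.
by rewrite eqxx op_prefixS /step nth_rcons size_op_prefix ltnn eqxx.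
Qed.

Lemma eq_op_prefix (z z' : N.-tuple bool) n :
  (forall i, (i < n)%N -> nth false z i = nth false z' i) ->
  op_prefix z n = op_prefix z' n.
Proof.
elim: n => [//|n IH] eq_zz'; rewrite !op_prefixS /step IH ?eq_zz' //.
by move=> i /ltnW; apply: eq_zz'.
Qed.

End Evaluation.

Definition flip_noise N (o : 'I_N) (z : N.-tuple bool) : N.-tuple bool :=
  [tuple if i == o then ~~ tnth z i else tnth z i | i < N].

Lemma flip_noiseK N (o : 'I_N) : involutive (flip_noise o).
Proof.
move=> z; apply: eq_from_tnth => i; rewrite !tnth_mktuple.
by case: eqP; rewrite ?negbK.
Qed.

Lemma natr_negb_F2 (b : bool) : ((~~ b)%:R : 'F_2) = b%:R + 1.
Proof. by case: b; apply/val_inj. Qed.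

Lemma addr1_neq_F2 (x t : 'F_2) : (x + 1 != t) = (x == t).
Proof. by move: x t; do 2!case=> [[|[|//]]] ?. Qed.

Lemma op_values_flip L K N (C : circuit L K N) s (o : 'I_N) z :
  nth 0 (op_values C s (flip_noise o z)) o = nth 0 (op_values C s z) o + 1.
Proof.
rewrite /op_values -!/(op_prefix _ _ _ _) !(nth_op_prefix _ _ _ (ltn_ord o)).
rewrite !op_prefixS /step !nth_rcons !size_op_prefix ltnn eqxx.
have earlier_unchanged i : (i < o)%N -> nth false (flip_noise o z) i = nth false z i.
  move=> lt_io; have lt_iN := ltn_trans lt_io (ltn_ord o).
  rewrite -!(tnth_nth false _ (Ordinal lt_iN)) tnth_mktuple.
  by case: eqP => // /(congr1 val) /= eq_io; rewrite eq_io ltnn in lt_io.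
rewrite (eq_op_prefix C s earlier_unchanged).
by rewrite -!(tnth_nth false _ o) tnth_mktuple eqxx natr_negb_F2 addrA.
Qed.

Section NoiseDistribution.
Variables (R : realType) (N : nat) (eps : R).

Lemma sum_noise_prob : \sum_(z : N.-tuple bool) noise_prob eps z = 1.
Proof.
rewrite (reindex (fun f : {ffun 'I_N -> bool} => [tuple f i | i < N])); last first.
  exists (fun z : N.-tuple bool => [ffun i => tnth z i]) => [f _|z _].
    by apply/ffunP => i; rewrite ffunE tnth_mktuple.
  by apply: eq_from_tnth => i; rewrite tnth_mktuple ffunE.
rewrite /noise_prob.
under eq_bigr => f _ do under eq_bigr => i _ do rewrite tnth_mktuple.
rewrite -(bigA_distr_bigA (fun (i : 'I_N) (b : bool) => if b then eps else 1 - eps)).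
by rewrite big1 // => i _; rewrite big_bool /= addrC subrK.
Qed.

Hypotheses (eps_ge0 : 0 <= eps) (eps_le_half : eps <= 1 - eps).

Let one_sub_eps_ge0 : 0 <= 1 - eps. Proof. exact: le_trans eps_le_half. Qed.

Lemma noise_prob_ge0 (z : N.-tuple bool) : 0 <= noise_prob eps z.
Proof. by apply: prodr_ge0 => i _; case: (tnth z i). Qed.

Lemma noise_prob_flip (o : 'I_N) (z : N.-tuple bool) :
  eps * noise_prob eps (flip_noise o z) <= (1 - eps) * noise_prob eps z.
Proof.
rewrite /noise_prob (bigD1 o) // [X in _ <= _ * X](bigD1 o) //= tnth_mktuple eqxx.
rewrite [X in eps * (_ * X)](eq_bigr (fun i => if tnth z i then eps else 1 - eps));
  last by move=> i /negPf ne_io; rewrite tnth_mktuple ne_io.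
set rest := \prod_(i < N | i != o) _.
have rest_ge0 : 0 <= rest by apply: prodr_ge0 => i _; case: (tnth z i).
rewrite !mulrA; apply: ler_wpM2r => //.
by case: (tnth z o) => /=; [rewrite mulrC | apply: ler_pM].
Qed.

Lemma flip_toggled_event_ge (o : 'I_N) (E : pred (N.-tuple bool)) :
  (forall z, E (flip_noise o z) = ~~ E z) ->
  eps <= \sum_(z | E z) noise_prob eps z.
Proof.
move=> E_flip; set p := \sum_(z | E z) _.
have complement : p + \sum_(z | ~~ E z) noise_prob eps z = 1.
  by rewrite -sum_noise_prob [RHS](bigID E).
have reflect_complement : \sum_(z | ~~ E z) noise_prob eps z =
                          \sum_(z | E z) noise_prob eps (flip_noise o z).
  rewrite (reindex_inj (inv_inj (flip_noiseK o))) /=.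
  by apply: eq_bigl => z; rewrite E_flip negbK.
have : eps * \sum_(z | ~~ E z) noise_prob eps z <= (1 - eps) * p.
  rewrite reflect_complement !mulr_sumr.
  by apply: ler_sum => z _; apply: noise_prob_flip.
have -> : \sum_(z | ~~ E z) noise_prob eps z = 1 - p by rewrite -complement addrC addKr.
lra.
Qed.

End NoiseDistribution.

Section BlockError.
Variables (R : realType) (L K N D : nat) (C : circuit L K N).
Variables (A : 'M['F_2]_(L, K)) (eps : R).
Hypothesis wfC : wf_circuit D C.

Lemma blk_err_ge_eps s (k : 'I_K) :
  0 <= eps -> eps <= 1 - eps -> eps <= blk_err C eps A s.
Proof.
move=> eps_ge0 eps_le_half; have [_ [_ outp_lt]] := wfC.
pose o : 'I_N := Ordinal (outp_lt k).
pose bit_wrong z := circ_out C s z 0 k != (s *m A) 0 k.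
apply: le_trans (flip_toggled_event_ge eps_ge0 eps_le_half (o := o) (E := bit_wrong) _) _.
  by move=> z; rewrite /bit_wrong !mxE (op_values_flip C s o) addr1_neq_F2 negbK.
rewrite /blk_err [leRHS]big_mkcond [leLHS]big_mkcond /=.
apply: ler_sum => z _; case: ifP => wrong_bit; last first.
  by case: ifP => _ //; apply: noise_prob_ge0.
suff -> : circ_out C s z != s *m A by [].
by apply: contraNneq wrong_bit => ->.
Qed.

Lemma blk_err_eq1_of_few_ops :
  \rank A = L -> (N < L)%N -> exists s, blk_err C eps A s = 1.
Proof.
move=> rkA lt_NL; have [_ [_ outp_lt]] := wfC.
pose read_out (x : N.-tuple 'F_2) : 'rV['F_2]_K := \row_k nth 0 x (outp C k).
have circ_outE s z : circ_out C s z = read_out [tuple nth 0 (op_values C s z) i | i < N].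
  apply/rowP => k; rewrite !mxE.
  by rewrite -(tnth_nth 0 _ (Ordinal (outp_lt k))) tnth_mktuple.
have [/existsP[s /forallP always_wrong]|] :=
  boolP [exists s, [forall z, circ_out C s z != s *m A]].
  by exists s; rewrite /blk_err (eq_bigl xpredT) ?sum_noise_prob.
rewrite negb_exists => /forallP sometimes_right; exfalso.
have codes_reached : [set s *m A | s in [set: 'rV['F_2]_L]]
                     \subset [set read_out x | x in [set: N.-tuple 'F_2]].
  apply/subsetP => _ /imsetP[s _ ->].
  have /existsP[z /negbNE/eqP <-] := sometimes_right s.
  by rewrite circ_outE imset_f.
have := leq_trans (subset_leq_card codes_reached) (leq_imset_card _ _).
rewrite card_imset; last by apply: row_free_inj; rewrite /row_free rkA.
rewrite !cardsT card_mx card_tuple card_Fp // mul1n leq_exp2l //.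
by rewrite leqNgt lt_NL.
Qed.

End BlockError.

Lemma ln_inv_le_ln_div (R : realType) (D eps p : R) :
  1 <= D -> 0 < eps -> eps < p -> ln p^-1 <= ln (D / eps).
Proof.
move=> D_ge1 eps_gt0 lt_eps_p; have p_gt0 := lt_trans eps_gt0 lt_eps_p.
rewrite ler_ln ?posrE ?invr_gt0 ?divr_gt0 //; last by lra.
apply: le_trans (_ : eps^-1 <= _); first by rewrite lef_pV2 ?posrE // ltW.
by rewrite mulrC ler_peMr // invr_ge0 ltW.
Qed.

Unset Implicit Arguments.

Theorem theorem4 (R : realType) (L K D N : nat) (A : 'M['F_2]_(L, K))
    (eps ptar : R) (C : circuit L K N) :
  \rank A = L ->
  (1 <= D)%N ->
  0 < eps -> eps < 1 / 2 ->
  wf_circuit D C ->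
  (forall s : 'rV['F_2]_L, blk_err C eps A s < ptar) ->
  (L%:R * ln (ptar^-1)) / (K%:R * D%:R * ln (D%:R / eps)) <= N%:R / K%:R.
Proof.
move=> rkA D_ge1 eps_gt0 eps_lt_half wfC err_lt_p.
have [->|K_neq0] := eqVneq K 0%N; first by rewrite !mul0r invr0 !mulr0.
have K_pos : (0 < K)%N by rewrite lt0n.
have D_ge1r : (1 : R) <= D%:R by rewrite ler1n.
have lt_eps_p : eps < ptar.
  apply: le_lt_trans (err_lt_p 0).
  by apply: (blk_err_ge_eps A wfC 0 (Ordinal K_pos)); lra.
set a := ln (D%:R / eps).
have a_gt0 : 0 < a by apply: ln_gt0; rewrite ltr_pdivlMr //; lra.
have denom_gt0 : 0 < K%:R * D%:R * a by rewrite !mulr_gt0 ?ltr0n.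
rewrite ler_pdivrMr // [leRHS](_ : _ = N%:R * D%:R * a); last first.
  by field; rewrite pnatr_eq0.
have [le_LN|lt_NL] := leqP L N.
  apply: (le_trans (y := L%:R * a)); first by rewrite ler_wpM2l ?ln_inv_le_ln_div.
  apply: (le_trans (y := N%:R * a)); first by rewrite ler_wpM2r ?ler_nat ?ltW.
  by rewrite -mulrA ler_wpM2l // ler_peMl // ltW.
have [s err1] := blk_err_eq1_of_few_ops eps wfC rkA lt_NL.
have ln_neg : ln ptar^-1 < 0.
  by apply: ln_lt0; rewrite invr_gt0 invf_lt1 -?err1 ?err_lt_p //; lra.
apply: le_trans (_ : 0 <= _); last by rewrite !mulr_ge0 // ltW.
by rewrite mulr_ge0_le0 // ltW.
Qed.
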